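(* Let $\phi\in(0,1)$ and $\gamma_1\in[1,2)$ with $\gamma_1\phi\ne1$. For $\gamma_2\in\mathbb{R}$ let $z_1(\gamma_2),z_2(\gamma_2)$ be the two roots of $z^2-(2-\gamma_1-\gamma_2+\gamma_1\gamma_2\phi)z+(\gamma_1-1)(\gamma_2-1)=0$, let $\Delta(\gamma_2):=(2-\gamma_1-\gamma_2+\gamma_1\gamma_2\phi)^2-4(\gamma_1-1)(\gamma_2-1)$, let $\xi_1,\xi_2$ be the roots of $\Delta(\gamma_2)=0$ with $|\xi_1|\le|\xi_2|$, and $f(\gamma_2):=\max\{|z_1(\gamma_2)|,|z_2(\gamma_2)|\}$. Then $1\le\xi_1$, and: (a) if $\gamma_1\in[1,\frac{2}{1+\sqrt{1-\phi}}]$, then $f$ is non-increasing on $[1,\gamma_1]$; (b) if $\gamma_1\in[\frac{2}{1+\sqrt{1-\phi}},2)$, then $\xi_1\le\gamma_1$, $f$ is non-increasing on $[1,\xi_1]$, and $f(\gamma_2)=\sqrt{(\gamma_1-1)(\gamma_2-1)}$ for all $\gamma_2\in[\xi_1,\gamma_1]$. *)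

From HB Require Import structures.
From mathcomp Require Import all_boot all_order all_algebra.
From mathcomp Require Import complex.
Set Implicit Arguments. Unset Strict Implicit. Unset Printing Implicit Defensive.
Import Order.TTheory GRing.Theory Num.Theory.
Local Open Scope ring_scope.

Definition bcoef {R : rcfType} (phi g1 g2 : R) : R :=
  2 - g1 - g2 + g1 * g2 * phi.

Definition ccoef {R : rcfType} (g1 g2 : R) : R := (g1 - 1) * (g2 - 1).

Definition charpoly {R : rcfType} (phi g1 g2 : R) : {poly R[i]} :=
  'X^2 - (real_complex R (bcoef phi g1 g2))%:P * 'X + (real_complex R (ccoef g1 g2))%:P.

Definition Delta {R : rcfType} (phi g1 g2 : R) : R :=
  bcoef phi g1 g2 ^+ 2 - 4 * ccoef g1 g2.

Definition fmax {R : rcfType} (z1 z2 : R -> R[i]) (g2 : R) : R :=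
  Num.max (ComplexField.Normc.normc (z1 g2)) (ComplexField.Normc.normc (z2 g2)).

From HB Require Import structures.
From mathcomp Require Import all_boot all_order all_algebra.
From mathcomp Require Import complex.
From mathcomp Require Import ring lra.

(* The roots z1, z2 of z^2 - b z + c are either both real, and then
   max |z_i| = (|b| + sqrt Delta) / 2, or complex conjugate, and then
   max |z_i| = sqrt c.  As a function of g2, Delta is a quadratic with leading
   coefficient (g1 phi - 1)^2 and explicit roots 1 <= xi_lo <= xi_hi.  Left of
   xi_lo, b is affine with slope g1 phi - 1, while
   sqrt Delta = |g1 phi - 1| sqrt ((xi_lo - g2) (xi_hi - g2)) decreases at least
   at that rate by AM-GM, so f is non-increasing; between the roots f = sqrt c.
   Which case occurs at g2 = g1 is decided by the sign of
   Delta(g1) = g1^2 phi ((1 - s) g1 - 2) ((1 + s) g1 - 2), s = sqrt (1 - phi),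
   since the vertex of Delta lies to the right of g1. *)

Set Implicit Arguments.
Unset Strict Implicit.
Unset Printing Implicit Defensive.
Import Order.TTheory GRing.Theory Num.Theory.
Local Open Scope ring_scope.

Lemma monic_quadratic_roots (R : rcfType) (b c : R) (z1 z2 : R[i]) :
  'X^2 - (real_complex R b)%:P * 'X + (real_complex R c)%:P =
    ('X - z1%:P) * ('X - z2%:P) ->
  exists p q r : R, [/\ z1 = Complex p q, z2 = Complex r (- q),
    b = p + r, c = p * r + q ^+ 2 & q * (r - p) = 0].
Proof.
move=> factor.
have := congr1 (horner^~ 0) factor; have := congr1 (horner^~ 1) factor.
rewrite !hornerE expr0n expr1n /= subr0 add0r mulrNN => at1 at0.
have sum : real_complex R b = z1 + z2.
  have -> : real_complex R b =
      1 + real_complex R c - (1 - real_complex R b + real_complex R c) by ring.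
  by rewrite at1 at0; ring.
case: z1 z2 at0 sum {factor at1} => [p q] [r s] /eqP + /eqP.
rewrite !eq_complex /= => /andP[/eqP c_eq /eqP im0] /andP[/eqP b_eq /eqP s_eq].
have {}s_eq : s = - q by lra.
rewrite {s}s_eq in c_eq im0 *.
exists p, q, r; split=> //; first by rewrite c_eq; ring.
by rewrite [RHS]im0; ring.
Qed.

Lemma maxr_norm (R : realFieldType) (p r : R) :
  Num.max `|p| `|r| = (`|p + r| + `|p - r|) / 2.
Proof.
case: leP => cmp; have [hp|hp] := lerP 0 p; have [hr|hr] := lerP 0 r;
  have [hs|hs] := lerP 0 (p + r); have [hd|hd] := lerP 0 (p - r);
  rewrite ?(ger0_norm hp) ?(ltr0_norm hp) ?(ger0_norm hr) ?(ltr0_norm hr)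
    ?(ger0_norm hs) ?(ltr0_norm hs) ?(ger0_norm hd) ?(ltr0_norm hd) in cmp *;
  lra.
Qed.

Section QuadraticRoots.
Variables (R : rcfType) (b c : R) (z1 z2 : R[i]).
Hypothesis factor : 'X^2 - (real_complex R b)%:P * 'X + (real_complex R c)%:P =
  ('X - z1%:P) * ('X - z2%:P).

Lemma max_normc_real_roots : 0 <= b ^+ 2 - 4 * c ->
  Num.max (ComplexField.Normc.normc z1) (ComplexField.Normc.normc z2) =
    (`|b| + Num.sqrt (b ^+ 2 - 4 * c)) / 2.
Proof.
have [p [q [r [-> -> -> -> qrp]]]] := monic_quadratic_roots factor.
have -> : (p + r) ^+ 2 - 4 * (p * r + q ^+ 2) = (p - r) ^+ 2 - 4 * q ^+ 2.
  by ring.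
move=> disc_ge0; have {qrp} q0 : q = 0.
  have [//|q_neq0] := eqVneq q 0.
  move/eqP: qrp; rewrite mulf_eq0 (negbTE q_neq0) subr_eq0 => /eqP rp.
  move: disc_ge0; rewrite rp subrr expr0n /= add0r oppr_ge0 pmulr_rle0 //.
  by move=> q2_le0; apply/eqP; rewrite -sqrf_eq0 eq_le q2_le0 sqr_ge0.
rewrite q0 oppr0 /= expr0n /= mulr0 subr0 !addr0 !sqrtr_sqr; exact: maxr_norm.
Qed.

Lemma max_normc_nonreal_roots : b ^+ 2 - 4 * c <= 0 ->
  Num.max (ComplexField.Normc.normc z1) (ComplexField.Normc.normc z2) =
    Num.sqrt c.
Proof.
have [p [q [r [-> -> -> -> qrp]]]] := monic_quadratic_roots factor.
have -> : (p + r) ^+ 2 - 4 * (p * r + q ^+ 2) = (p - r) ^+ 2 - 4 * q ^+ 2.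
  by ring.
move=> disc_le0; have {qrp} -> : r = p.
  have [q0|q_neq0] := eqVneq q 0.
    move: disc_le0; rewrite q0 expr0n /= mulr0 subr0 => d_le0.
    by apply/eqP; rewrite eq_sym -subr_eq0 -sqrf_eq0 eq_le d_le0 sqr_ge0.
  by move/eqP: qrp; rewrite mulf_eq0 (negbTE q_neq0) subr_eq0 => /eqP.
by rewrite /= sqrrN maxxx; congr Num.sqrt; ring.
Qed.
End QuadraticRoots.

Lemma sqrtr_le (R : rcfType) (a y : R) :
  0 <= y -> a <= y ^+ 2 -> Num.sqrt a <= y.
Proof. by move=> y_ge0 /ler_wsqrtr; rewrite sqrtr_sqr ger0_norm. Qed.

Lemma sqrtr_AMGM (R : rcfType) (x y : R) : 0 <= x -> 0 <= y ->
  2 * Num.sqrt (x * y) <= x + y.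
Proof.
move=> x_ge0 y_ge0; rewrite -ler_sqr ?nnegrE ?mulr_ge0 ?addr_ge0 ?sqrtr_ge0 //.
by rewrite exprMn sqr_sqrtr ?mulr_ge0 //; have := sqr_ge0 (x - y); nra.
Qed.

Lemma sqrtrM_shift_le (R : rcfType) (u v h : R) :
  0 <= h -> h <= u -> h <= v ->
  Num.sqrt ((u - h) * (v - h)) + h <= Num.sqrt (u * v).
Proof.
move=> h_ge0 h_le_u h_le_v.
have u_ge0 : 0 <= u := le_trans h_ge0 h_le_u.
have v_ge0 : 0 <= v := le_trans h_ge0 h_le_v.
have := sqrtr_AMGM u_ge0 v_ge0; set X := Num.sqrt (u * v) => AMGM.
have X2 : X ^+ 2 = u * v by rewrite sqr_sqrtr ?mulr_ge0.
have h_le_X : h <= X.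
  by rewrite -(ger0_norm h_ge0) -sqrtr_sqr ler_wsqrtr //; nra.
rewrite -lerBrDr sqrtr_le ?subr_ge0 //.
have := ler_wpM2l h_ge0 AMGM; nra.
Qed.

Lemma mulr_subr_le0 (R : realDomainType) (l h t : R) : l <= h ->
  ((t - l) * (t - h) <= 0) = (l <= t <= h).
Proof.
move=> l_le_h; apply/idP/andP => [prod_le0|[l_le_t t_le_h]].
  by split; rewrite leNgt; apply/negP => lt; move: prod_le0; nra.
by rewrite mulr_ge0_le0 // subr_cp0.
Qed.

Lemma le_smaller_root (R : realDomainType) (l h t : R) :
  0 <= (t - l) * (t - h) -> 2 * t <= l + h -> t <= l.
Proof. by move=> prod_ge0 mid; rewrite leNgt; apply/negP => lt; nra. Qed.

Lemma smaller_root_unique (R : realDomainType) (x y u v : R) :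
  (forall t, t = x \/ t = y <-> t = u \/ t = v) -> 0 <= u <= v ->
  `|x| <= `|y| -> x = u.
Proof.
move=> same /andP[u_ge0 u_le_v] xy.
have [] := proj1 (same x) (or_introl erefl) => // x_v.
have [u_x|u_y] := proj2 (same u) (or_introl erefl); first by rewrite -u_x.
move: xy; rewrite x_v -u_y !ger0_norm ?(le_trans u_ge0) // => v_le_u.
by apply/le_anti; rewrite v_le_u.
Qed.

Definition Delta_center {R : rcfType} (phi g1 : R) : R :=
  (2 * (g1 - 1) + (1 - g1 * phi) * (2 - g1)) / (g1 * phi - 1) ^+ 2.

Definition Delta_radius {R : rcfType} (phi g1 : R) : R :=
  2 * Num.sqrt ((g1 - 1) * (g1 ^+ 2 * phi * (1 - phi))) / (g1 * phi - 1) ^+ 2.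

Definition xi_lo {R : rcfType} (phi g1 : R) : R :=
  Delta_center phi g1 - Delta_radius phi g1.

Definition xi_hi {R : rcfType} (phi g1 : R) : R :=
  Delta_center phi g1 + Delta_radius phi g1.

Section Discriminant.
Variables (R : rcfType) (phi g1 : R).
Hypotheses (phi_ge0 : 0 <= phi) (phi_le1 : phi <= 1) (g1_ge1 : 1 <= g1)
  (g1phi_neq1 : g1 * phi != 1).

Local Notation a := (g1 * phi - 1).
Local Notation lo := (xi_lo phi g1).
Local Notation hi := (xi_hi phi g1).

Lemma lead_Delta_gt0 : 0 < a ^+ 2.
Proof. by rewrite exprn_even_gt0 //= subr_eq0 g1phi_neq1. Qed.

Lemma Delta_factor t : Delta phi g1 t = a ^+ 2 * (t - lo) * (t - hi).
Proof.
have rad_ge0 : 0 <= (g1 - 1) * (g1 ^+ 2 * phi * (1 - phi)).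
  by rewrite mulr_ge0 ?subr_ge0 // mulr_ge0 ?subr_ge0 // mulr_ge0 ?sqr_ge0.
have -> : a ^+ 2 * (t - lo) * (t - hi) =
    a ^+ 2 * ((t - Delta_center phi g1) ^+ 2 - Delta_radius phi g1 ^+ 2).
  by rewrite /xi_lo /xi_hi; ring.
rewrite /Delta_radius expr_div_n exprMn sqr_sqrtr // /Delta_center.
by rewrite /Delta /bcoef /ccoef; field; rewrite subr_eq0.
Qed.

Lemma xi_lo_le_hi : lo <= hi.
Proof.
have : 0 <= Delta_radius phi g1.
  by rewrite /Delta_radius divr_ge0 ?sqr_ge0 // mulr_ge0 ?sqrtr_ge0.
by rewrite /xi_lo /xi_hi; lra.
Qed.

Lemma Delta_le0 t : (Delta phi g1 t <= 0) = (lo <= t <= hi).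
Proof.
rewrite Delta_factor -mulrA pmulr_rle0 ?lead_Delta_gt0 //.
by rewrite mulr_subr_le0 ?xi_lo_le_hi.
Qed.

Lemma Delta_ge0 t : t <= lo -> 0 <= Delta phi g1 t.
Proof.
move=> t_le_lo; rewrite Delta_factor -mulrA mulr_ge0 ?sqr_ge0 //.
rewrite mulr_le0 ?subr_le0 //.
exact: le_trans t_le_lo xi_lo_le_hi.
Qed.

Lemma Delta_eq0 t : Delta phi g1 t = 0 <-> t = lo \/ t = hi.
Proof.
rewrite Delta_factor; split=> [/eqP | [] ->]; rewrite ?subrr ?mulr0 ?mul0r //.
rewrite !mulf_eq0 !subr_eq0 (negbTE g1phi_neq1) /=.
by case/orP=> /eqP; [left | right].
Qed.

Lemma xi_lo_ge1 : 1 <= lo.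
Proof.
have g1_sub1_ge0 : 0 <= g1 - 1 by rewrite subr_ge0.
have spread_ge0 : 0 <= g1 ^+ 2 * phi * (1 - phi).
  by rewrite mulr_ge0 ?subr_ge0 // mulr_ge0 ?sqr_ge0.
have := sqrtr_AMGM g1_sub1_ge0 spread_ge0.
rewrite /xi_lo /Delta_center /Delta_radius -mulrBl.
rewrite ler_pdivlMr ?lead_Delta_gt0 // mul1r.
have : (2 * (g1 - 1) + (1 - g1 * phi) * (2 - g1)) - a ^+ 2 =
  (g1 - 1) + g1 ^+ 2 * phi * (1 - phi) by ring.
lra.
Qed.

Lemma g1_le_Delta_center : g1 <= 2 -> g1 <= Delta_center phi g1.
Proof.
move=> g1_le2; rewrite /Delta_center ler_pdivlMr ?lead_Delta_gt0 // -subr_ge0.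
have -> : 2 * (g1 - 1) + (1 - g1 * phi) * (2 - g1) - g1 * a ^+ 2 =
    g1 * phi * (g1 ^+ 2 * (1 - phi) + (g1 - 1) * (2 - g1)) by ring.
have g1_ge0 : 0 <= g1 := le_trans ler01 g1_ge1.
by rewrite !mulr_ge0 ?addr_ge0 ?mulr_ge0 ?sqr_ge0 ?subr_ge0.
Qed.

Local Notation s := (Num.sqrt (1 - phi)).

Lemma Delta_at_g1 :
  Delta phi g1 g1 = g1 ^+ 2 * phi * (((1 - s) * g1 - 2) * ((1 + s) * g1 - 2)).
Proof.
have -> : ((1 - s) * g1 - 2) * ((1 + s) * g1 - 2) =
    (1 - s ^+ 2) * g1 ^+ 2 - 4 * g1 + 4 by ring.
by rewrite sqr_sqrtr ?subr_ge0 // /Delta /bcoef /ccoef; ring.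
Qed.

Let g1sq_phi_ge0 : 0 <= g1 ^+ 2 * phi. Proof. by rewrite mulr_ge0 ?sqr_ge0. Qed.

Lemma g1_le_xi_lo : g1 <= 2 / (1 + s) -> g1 <= lo.
Proof.
have s_ge0 : 0 <= s := sqrtr_ge0 _.
rewrite ler_pdivlMr; last by lra.
move=> g1s_le2.
have g1_le2 : g1 <= 2 by nra.
have : 0 <= Delta phi g1 g1.
  have sg1_ge0 := mulr_ge0 s_ge0 (le_trans ler01 g1_ge1).
  by rewrite Delta_at_g1; apply: mulr_ge0 => //; apply: mulr_le0; nra.
rewrite Delta_factor -mulrA pmulr_rge0 ?lead_Delta_gt0 // => prod_ge0.
apply: le_smaller_root prod_ge0 _.
have -> : lo + hi = 2 * Delta_center phi g1 by rewrite /xi_lo /xi_hi; ring.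
by rewrite ler_pM2l ?g1_le_Delta_center.
Qed.

Lemma xi_lo_le_g1 : g1 < 2 -> 2 / (1 + s) <= g1 -> lo <= g1 <= hi.
Proof.
have s_ge0 : 0 <= s := sqrtr_ge0 _.
move=> g1_lt2; rewrite ler_pdivrMr; last by lra.
move=> g1s_ge2; rewrite -Delta_le0 Delta_at_g1 mulr_ge0_le0 //.
rewrite mulr_le0_ge0 //; nra.
Qed.

Variables (z1 z2 : R -> R[i]).
Hypothesis roots : forall t,
  charpoly phi g1 t = ('X - (z1 t)%:P) * ('X - (z2 t)%:P).

Lemma sqrtr_Delta t :
  Num.sqrt (Delta phi g1 t) = `|a| * Num.sqrt ((lo - t) * (hi - t)).
Proof.
rewrite Delta_factor -mulrA sqrtrM ?sqr_ge0 // sqrtr_sqr.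
by congr (_ * Num.sqrt _); ring.
Qed.

Lemma fmax_nonincr x y : x <= y -> y <= lo -> fmax z1 z2 y <= fmax z1 z2 x.
Proof.
move=> x_le_y y_le_lo; have x_le_lo := le_trans x_le_y y_le_lo.
rewrite /fmax (max_normc_real_roots (roots x));
  rewrite ?(max_normc_real_roots (roots y)); try exact: Delta_ge0.
rewrite -!/(Delta phi g1 _) !sqrtr_Delta ler_pM2r ?invr_gt0 //.
have b_y : `|bcoef phi g1 y| <= `|bcoef phi g1 x| + `|a| * (y - x).
  have -> : bcoef phi g1 y = bcoef phi g1 x + a * (y - x).
    by rewrite /bcoef; ring.
  apply: le_trans (ler_normD _ _) _.
  by rewrite normrM (ger0_norm (_ : 0 <= y - x)) ?subr_ge0.
have := sqrtrM_shift_le (u := lo - x) (v := hi - x) (h := y - x).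
rewrite !subr_ge0 !lerD2r x_le_y y_le_lo (le_trans y_le_lo xi_lo_le_hi).
have -> : lo - x - (y - x) = lo - y by ring.
have -> : hi - x - (y - x) = hi - y by ring.
move=> /(_ isT isT isT) /(ler_wpM2l (normr_ge0 a)); lra.
Qed.

Lemma fmax_between_roots x :
  lo <= x <= hi -> fmax z1 z2 x = Num.sqrt (ccoef g1 x).
Proof. by rewrite -Delta_le0; exact: max_normc_nonreal_roots (roots x). Qed.

End Discriminant.

Theorem mainTheorem18 (R : rcfType) (phi g1 : R)
  (z1 z2 : R -> R[i]) (xi1 xi2 : R) :
  0 < phi -> phi < 1 -> 1 <= g1 -> g1 < 2 -> g1 * phi != 1 ->
  (forall g2 : R, charpoly phi g1 g2 = ('X - (z1 g2)%:P) * ('X - (z2 g2)%:P)) ->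
  (forall x : R, Delta phi g1 x = 0 <-> (x = xi1 \/ x = xi2)) ->
  `|xi1| <= `|xi2| ->
  1 <= xi1 /\
  (g1 <= 2 / (1 + Num.sqrt (1 - phi)) ->
     forall x y : R, 1 <= x -> x <= y -> y <= g1 -> fmax z1 z2 y <= fmax z1 z2 x) /\
  (2 / (1 + Num.sqrt (1 - phi)) <= g1 ->
     [/\ xi1 <= g1,
         forall x y : R, 1 <= x -> x <= y -> y <= xi1 -> fmax z1 z2 y <= fmax z1 z2 x &
         forall x : R, xi1 <= x -> x <= g1 ->
           fmax z1 z2 x = Num.sqrt ((g1 - 1) * (x - 1))]).
Proof.
move=> /ltW phi_ge0 /ltW phi_le1 g1_ge1 g1_lt2 g1phi_neq1 roots.
move=> Delta_roots xi_order.
have xi1E : xi1 = xi_lo phi g1.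
  apply: smaller_root_unique xi_order => [t|].
    apply: iff_trans (iff_sym (Delta_roots t)) _.
    exact: Delta_eq0 phi_ge0 phi_le1 g1_ge1 g1phi_neq1 t.
  by rewrite (le_trans ler01 (xi_lo_ge1 _ _ _ _)) ?xi_lo_le_hi.
rewrite xi1E; split; first exact: xi_lo_ge1.
split=> [small x y _ x_le_y y_le_g1 | large].
  by apply: fmax_nonincr x_le_y (le_trans y_le_g1 (g1_le_xi_lo _ _ _ _ small)).
have /andP[lo_le_g1 g1_le_hi] :=
  xi_lo_le_g1 phi_ge0 phi_le1 g1_ge1 g1phi_neq1 g1_lt2 large.
split=> // [x y _ | x lo_le_x x_le_g1]; first exact: fmax_nonincr.
apply: (fmax_between_roots phi_ge0 phi_le1 g1_ge1 g1phi_neq1 roots).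
by rewrite lo_le_x (le_trans x_le_g1 g1_le_hi).
Qed.
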